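(* If $\psi \in \mathcal{D}^1$, then for each $i=1,\dots,I$ and every $u\in\mathbb{R}_+$, \[i\, \psi_i'(u)=\sum_{j=1}^{I}M_{ij}^*(\psi'(u))\,v^{\mathrm{eff}}_j(\psi'(u))\, \psi_j'(u),\] where $\psi'(u)=(\psi_1'(u),\dots,\psi_I'(u))$.
   Context: Fix $I\in\mathbb{N}$. $\mathcal{C}=\{f\in C(\mathbb{R}_+,\mathbb{R}_+):f(0)=0,f\text{ non-decreasing}\}$, $\mathcal{C}^\uparrow=\{f\in\mathcal{C}:f\text{ strictly increasing},\lim_{u\to\infty}f(u)=\infty\}$, $\mathcal{C}^1=\{f\in\mathcal{C}:f^{\mathbb{R}}\in C^1(\mathbb{R},\mathbb{R})\}$ where $f^{\mathbb{R}}$ extends $f$ by $0$ on $(-\infty,0)$. For $\psi\in\mathcal{C}^I$, $\phi_i(u)=u-\sum_j2(i\wedge j)\psi_j(u)$; $\mathcal{D}=\{\psi\in\mathcal{C}^I:\phi_I\in\mathcal{C}^\uparrow,\sum_ii\sup_{u_1\ne u_2}\frac{\psi_i(u_1)-\psi_i(u_2)}{\phi_i(u_1)-\phi_i(u_2)}<\frac12\}$ and $\mathcal{D}^1=\mathcal{D}\cap(\mathcal{C}^1)^I$. With $\kappa_{ij}=2(i\wedge j)$, for $\rho\in\mathbb{R}_+^I$ let $M(\rho)$ have $M_{ii}=1-\sum_{j\neq i}\kappa_{ij}\rho_j$, $M_{ij}=\kappa_{ij}\rho_j$ ($i\neq j$), and $M^*(\rho)$ have $M^*_{ii}=1-\sum_{j\ne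 i}\kappa_{ij}\rho_j$, $M^*_{ij}=\kappa_{ij}\rho_i$ ($i\neq j$). When $\sum_i2i\rho_i<1$, $M(\rho)$ is invertible and $v^{\mathrm{eff}}(\rho):=M(\rho)^{-1}(1,2,\dots,I)^T$ (for $\psi\in\mathcal{D}^1$ this condition holds for $\rho=\psi'(u)$). *)

From HB Require Import structures.
From mathcomp Require Import all_boot all_order all_algebra.
From mathcomp Require Import all_classical all_reals all_analysis.
Set Implicit Arguments. Unset Strict Implicit. Unset Printing Implicit Defensive.
Import Order.TTheory GRing.Theory Num.Theory.
Import numFieldNormedType.Exports.
Local Open Scope classical_set_scope.
Local Open Scope ring_scope.

Section Defs.
Variable R : realType.

(* Functions R_+ -> R_+ are represented as f : R -> R; only values on [0,oo) matter. *)

Definition classC (f : R -> R) : Prop :=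
  [/\ {within `[0, +oo[, continuous f},
      f 0 = 0,
      (forall u, 0 <= u -> 0 <= f u) &
      (forall u1 u2, 0 <= u1 -> u1 <= u2 -> f u1 <= f u2)].

Definition classCup (f : R -> R) : Prop :=
  [/\ classC f,
      (forall u1 u2, 0 <= u1 -> u1 < u2 -> f u1 < f u2) &
      f x @[x --> +oo] --> +oo].

Definition extR (f : R -> R) : R -> R := fun u => if u < 0 then 0 else f u.

Definition classC1 (f : R -> R) : Prop :=
  [/\ classC f,
      (forall x, derivable (extR f) x 1) &
      continuous (derive1 (extR f))].

Definition dpsi (I : nat) (psi : 'I_I -> R -> R) (u : R) : 'I_I -> R :=
  fun i => derive1 (extR (psi i)) u.

(* kappa_{kl} = 2 (k /\ l) with 1-based indices k, l *)
Definition kappa (k l : nat) : R := 2 * (minn k l)%:R.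

(* phi_k(u) = u - sum_j 2 (k /\ j) psi_j(u), k 1-based; psi j is psi_{j+1} *)
Definition phi (I : nat) (psi : 'I_I -> R -> R) (k : nat) (u : R) : R :=
  u - \sum_(j < I) kappa k j.+1 * psi j u.

Definition ratio_sup (I : nat) (psi : 'I_I -> R -> R) (i : 'I_I) : \bar R :=
  ereal_sup [set x : \bar R | exists u1 u2, [/\ 0 <= u1, 0 <= u2, u1 != u2 &
      x = ((psi i u1 - psi i u2) / (phi psi i.+1 u1 - phi psi i.+1 u2))%:E]].

Definition classD (I : nat) (psi : 'I_I -> R -> R) : Prop :=
  [/\ (forall i, classC (psi i)),
      classCup (phi psi I) &
      (\sum_(i < I) (i.+1)%:R%:E * ratio_sup psi i < (1 / 2)%:E)%E].

Definition classD1 (I : nat) (psi : 'I_I -> R -> R) : Prop :=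
  classD psi /\ (forall i, classC1 (psi i)).

(* M(rho) and M^*(rho), indices i j : 'I_I stand for i+1, j+1 *)
Definition Mmat (I : nat) (rho : 'I_I -> R) : 'M[R]_I :=
  \matrix_(i, j) if i == j then 1 - \sum_(k < I | k != i) kappa i.+1 k.+1 * rho k
                 else kappa i.+1 j.+1 * rho j.

Definition Mstar (I : nat) (rho : 'I_I -> R) : 'M[R]_I :=
  \matrix_(i, j) if i == j then 1 - \sum_(k < I | k != i) kappa i.+1 k.+1 * rho k
                 else kappa i.+1 j.+1 * rho i.

Definition veff (I : nat) (rho : 'I_I -> R) : 'cV[R]_I :=
  invmx (Mmat rho) *m \col_(i < I) (i.+1)%:R.

End Defs.

From HB Require Import structures.
From mathcomp Require Import all_boot all_order all_algebra.
From mathcomp Require Import all_classical all_reals all_analysis.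
From mathcomp Require Import lra ring.
Set Implicit Arguments. Unset Strict Implicit. Unset Printing Implicit Defensive.
Import Order.TTheory GRing.Theory Num.Theory.
Import numFieldNormedType.Exports.
Local Open Scope classical_set_scope.
Local Open Scope ring_scope.

(* Write [rho = psi'(u)].  Since [M*_ij rho_j = rho_i M_ij], the right-hand side is
   [rho_i (M(rho) v^eff(rho))_i = i rho_i] once [M(rho)] is invertible.  Invertibility
   needs [rho >= 0] and [sum_k 2 k rho_k < 1]: testing [M(rho) x = 0] against
   [(rho_i x_i)_i] gives a positive diagonal part plus the quadratic form of the
   positive semidefinite kernel [2 min(i, j)].  Both conditions on [rho] come from
   the class D, through right difference quotients of [psi_i]: they are nonnegative
   and bounded by those with [phi_i] in the denominator, as
   [0 < phi_i(u + h) - phi_i(u) <= h]. *)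

Lemma sum_ord_leq (n k : nat) : (k < n)%N -> (\sum_(m < n) (m <= k))%N = k.+1.
Proof.
move=> lt_kn; rewrite -big_mkcond /= (big_ord_narrow (F := fun=> 1%N) lt_kn).
by rewrite sum1_card card_ord.
Qed.

(* [minn i j + 1] counts the [m] with [m <= i] and [m <= j], so the form is a sum of squares. *)
Lemma min_kernel_form_ge0 (R : realDomainType) (n : nat) (y : 'I_n -> R) :
  0 <= \sum_(i < n) \sum_(j < n) y i * (minn i j).+1%:R * y j.
Proof.
have -> : \sum_(i < n) \sum_(j < n) y i * (minn i j).+1%:R * y j =
    \sum_(m < n) (\sum_(i < n) (m <= i)%:R * y i) ^+ 2.
  transitivity (\sum_(m < n) \sum_(i < n) \sum_(j < n)
      (m <= i)%:R * y i * ((m <= j)%:R * y j)); last first.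
    by apply: eq_bigr => m _; rewrite expr2 big_distrlr.
  rewrite [RHS]exchange_big; apply: eq_bigr => i _ /=.
  rewrite [RHS]exchange_big; apply: eq_bigr => j _ /=.
  have lt_min : (minn i j < n)%N by rewrite gtn_min ltn_ord.
  rewrite -(sum_ord_leq lt_min) natr_sum mulr_sumr mulr_suml.
  by apply: eq_bigr => m _; rewrite leq_min -mulnb natrM; ring.
by apply: sumr_ge0 => m _; exact: sqr_ge0.
Qed.

Section Kappa.
Variable R : realType.

Lemma kappa_ge0 (k l : nat) : 0 <= kappa R k l.
Proof. by rewrite mulr_ge0. Qed.

Lemma kappa_le_double_r (k l : nat) : kappa R k l <= 2 * l%:R.
Proof. by rewrite ler_pM2l // ler_nat geq_minr. Qed.

Lemma kappa_mono_l (k m l : nat) : (k <= m)%N -> kappa R k l <= kappa R m l.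
Proof.
move=> le_km; rewrite ler_pM2l // ler_nat leq_min geq_minr andbT.
exact: leq_trans (geq_minl _ _) le_km.
Qed.

Lemma kappa_form_ge0 (I : nat) (y : 'I_I -> R) :
  0 <= \sum_(i < I) \sum_(j < I) y i * kappa R i.+1 j.+1 * y j.
Proof.
have -> : \sum_(i < I) \sum_(j < I) y i * kappa R i.+1 j.+1 * y j =
    2 * \sum_(i < I) \sum_(j < I) y i * (minn i j).+1%:R * y j.
  rewrite mulr_sumr; apply: eq_bigr => i _; rewrite mulr_sumr.
  by apply: eq_bigr => j _; rewrite /kappa minnSS; ring.
by rewrite mulr_ge0 ?min_kernel_form_ge0.
Qed.

End Kappa.

Section Matrices.
Variables (R : realType) (I : nat) (rho : 'I_I -> R).

Lemma MmatE (i j : 'I_I) : Mmat rho i j =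
  (i == j)%:R * (1 - \sum_(k < I) kappa R i.+1 k.+1 * rho k) + kappa R i.+1 j.+1 * rho j.
Proof.
rewrite mxE; case: eqP => [<-|_] /=; last by ring.
by rewrite [in RHS](bigD1 i) //=; ring.
Qed.

Lemma Mstar_mul_rho (i j : 'I_I) : Mstar rho i j * rho j = rho i * Mmat rho i j.
Proof. by rewrite !mxE; case: eqP => [->|_]; ring. Qed.

Lemma Mstar_veff (i : 'I_I) : Mmat rho \in unitmx ->
  i.+1%:R * rho i = \sum_(j < I) Mstar rho i j * veff rho j 0 * rho j.
Proof.
move=> Munit.
have Mveff : Mmat rho *m veff rho = \col_(k < I) k.+1%:R by rewrite mulKVmx.
have := congr1 (fun A : 'cV_I => A i 0) Mveff; rewrite !mxE => <-.
rewrite mulrC mulr_sumr; apply: eq_bigr => j _.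
by rewrite mulrAC Mstar_mul_rho mulrA.
Qed.

Lemma Mmat_mul_sum (x : 'I_I -> R) (i : 'I_I) :
  \sum_(j < I) Mmat rho i j * x j =
  (1 - \sum_(k < I) kappa R i.+1 k.+1 * rho k) * x i +
  \sum_(j < I) kappa R i.+1 j.+1 * (rho j * x j).
Proof.
under eq_bigr => j _ do rewrite MmatE mulrDl.
rewrite big_split /= (bigD1 i) //= eqxx mul1r.
rewrite [X in _ + X + _]big1 ?addr0 => [|j]; last first.
  by rewrite eq_sym => /negbTE->; rewrite !mul0r.
by congr (_ + _); apply: eq_bigr => j _; rewrite mulrA.
Qed.

Hypothesis rho_ge0 : forall k, 0 <= rho k.
Hypothesis weighted_sum_lt1 : \sum_(k < I) 2 * k.+1%:R * rho k < 1.

Lemma kappa_row_sum_lt1 (i : 'I_I) : \sum_(k < I) kappa R i.+1 k.+1 * rho k < 1.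
Proof.
apply: le_lt_trans weighted_sum_lt1; apply: ler_sum => k _.
by rewrite ler_wpM2r ?kappa_le_double_r.
Qed.

(* Multiplying the [i]-th equation by [y i = rho i * x i] and summing gives
   [sum_i a_i rho_i x_i^2 + y^T kappa y = 0], a sum of two nonnegative terms. *)
Lemma Mmat_ker (x : 'I_I -> R) :
  (forall i, \sum_(j < I) Mmat rho i j * x j = 0) -> forall i, x i = 0.
Proof.
move=> Mx0.
pose a (i : 'I_I) := 1 - \sum_(k < I) kappa R i.+1 k.+1 * rho k.
have a_gt0 i : 0 < a i by rewrite subr_gt0 (kappa_row_sum_lt1 i).
pose y (i : 'I_I) := rho i * x i.
have eq_row i : a i * x i + \sum_(j < I) kappa R i.+1 j.+1 * y j = 0.
  by have := Mx0 i; rewrite Mmat_mul_sum.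
have split0 : \sum_(i < I) a i * rho i * x i ^+ 2 +
    \sum_(i < I) \sum_(j < I) y i * kappa R i.+1 j.+1 * y j = 0.
  rewrite -big_split big1 // => i _ /=.
  transitivity (y i * (a i * x i + \sum_(j < I) kappa R i.+1 j.+1 * y j));
    last by rewrite eq_row mulr0.
  rewrite mulrDr mulr_sumr.
  by congr (_ + _); [rewrite /y; ring | apply: eq_bigr => j _; ring].
have diag_ge0 i : 0 <= a i * rho i * x i ^+ 2.
  by rewrite mulr_ge0 ?sqr_ge0 // mulr_ge0 ?(ltW (a_gt0 i)).
have diag0 : \sum_(i < I) a i * rho i * x i ^+ 2 = 0.
  have := kappa_form_ge0 y; have : 0 <= \sum_(i < I) a i * rho i * x i ^+ 2 by exact: sumr_ge0.
  lra.
have y0 i : y i = 0.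
  have := @psumr_eq0P _ _ _ _ (fun i _ => diag_ge0 i) diag0 i isT.
  rewrite -mulrA => /eqP; rewrite mulf_eq0 (gt_eqF (a_gt0 i)) /= => /eqP rx0.
  by apply/eqP; rewrite -sqrf_eq0 exprMn expr2 -mulrA rx0 mulr0.
move=> i; have := eq_row i; rewrite big1 => [|j _]; last by rewrite y0 mulr0.
by rewrite addr0 => /eqP; rewrite mulf_eq0 (gt_eqF (a_gt0 i)) => /eqP.
Qed.

Lemma Mmat_unitmx : Mmat rho \in unitmx.
Proof.
rewrite unitmxE unitfE -det_tr; apply/negP => /det0P[v /eqP v_neq0 vM].
apply: v_neq0; apply/rowP => j; rewrite mxE.
apply: (@Mmat_ker (fun j => v 0 j)) => i.
have := congr1 (fun A : 'rV_I => A 0 i) vM; rewrite !mxE; apply: etrans.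
by apply: eq_bigr => k _; rewrite !mxE mulrC.
Qed.

End Matrices.

Section RightDerivative.
Variable R : realType.
Implicit Type f : R -> R.

Definition diff_quot f (u h : R) : R := h^-1 * (f (h + u) - f u).

Lemma derivable1_diff_quot_cvg f (u : R) : derivable f u 1 ->
  diff_quot f u @ 0^' --> f^`()%classic u.
Proof.
rewrite /derivable.
have -> : (fun h : R => h^-1 *: ((f \o shift u) (h *: (1 : R)) - f u)) = diff_quot f u.
  by apply/funext => h; congr (_ * (f (_ + _) - _)); exact: mulr1.
by move=> df; exact: df.
Qed.

Lemma extR_diff_quot_cvg f (u : R) : 0 <= u -> derivable (extR f) u 1 ->
  diff_quot f u @ 0^'+ --> (extR f)^`()%classic u.
Proof.
move=> u_ge0 df.
apply: cvg_trans _ (cvg_dnbhs_at_right (derivable1_diff_quot_cvg df)).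
apply: near_eq_cvg; near=> h.
have h_gt0 : 0 < h by near: h; exact: nbhs_right_gt.
by rewrite /diff_quot /extR !ltNge u_ge0 (addr_ge0 (ltW h_gt0) u_ge0).
Unshelve. all: by end_near.
Qed.

Lemma classC1_derive_ge0 f (u : R) : classC1 f -> 0 <= u -> 0 <= (extR f)^`()%classic u.
Proof.
case=> -[_ _ _ f_mono] df _ u_ge0.
apply: (cvgr_to_ge (extR_diff_quot_cvg u_ge0 (df u))); near=> h.
have h_gt0 : 0 < h by near: h; exact: nbhs_right_gt.
rewrite mulr_ge0 ?invr_ge0 ?(ltW h_gt0) // subr_ge0 f_mono //; lra.
Unshelve. all: by end_near.
Qed.

End RightDerivative.

Lemma classC_subr_ge0 (R : realType) (f : R -> R) (u1 u2 : R) :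
  classC f -> 0 <= u1 -> u1 <= u2 -> 0 <= f u2 - f u1.
Proof. by case=> _ _ _ f_mono u1_ge0 le_u12; rewrite subr_ge0 f_mono. Qed.

Section Phi.
Variables (R : realType) (I : nat) (psi : 'I_I -> R -> R).

Lemma phiB (k : nat) (u1 u2 : R) : phi psi k u2 - phi psi k u1 =
  (u2 - u1) - \sum_(j < I) kappa R k j.+1 * (psi j u2 - psi j u1).
Proof. by under [in RHS]eq_bigr => j _ do rewrite mulrBr; rewrite sumrB /phi; ring. Qed.

Hypothesis psiC : forall i, classC (psi i).

Lemma phi_incr_le (k : nat) (u1 u2 : R) : 0 <= u1 -> u1 <= u2 ->
  phi psi k u2 - phi psi k u1 <= u2 - u1.
Proof.
move=> u1_ge0 le_u12; rewrite phiB lerBlDr lerDl.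
by apply: sumr_ge0 => j _; rewrite mulr_ge0 ?kappa_ge0 ?classC_subr_ge0.
Qed.

Lemma phi_incr_le_index (k m : nat) (u1 u2 : R) : (k <= m)%N -> 0 <= u1 -> u1 <= u2 ->
  phi psi m u2 - phi psi m u1 <= phi psi k u2 - phi psi k u1.
Proof.
move=> le_km u1_ge0 le_u12; rewrite !phiB lerB // ler_sum // => j _.
by rewrite ler_wpM2r ?kappa_mono_l ?classC_subr_ge0.
Qed.

End Phi.

Section ClassD.
Variables (R : realType) (I : nat) (psi : 'I_I -> R -> R).
Hypothesis psiD : classD psi.

Let psiC : forall i, classC (psi i). Proof. by case: psiD. Qed.

Lemma phi_incr_gt0 (i : 'I_I) (u1 u2 : R) : 0 <= u1 -> u1 < u2 ->
  0 < phi psi i.+1 u2 - phi psi i.+1 u1.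
Proof.
move=> u1_ge0 lt_u12; case: psiD => _ [_ phiI_incr _] _.
apply: lt_le_trans (phi_incr_le_index psiC (ltn_ord i) u1_ge0 (ltW lt_u12)).
by rewrite subr_gt0 phiI_incr.
Qed.

Lemma diff_quot_le_ratio_sup (i : 'I_I) (u h : R) : 0 <= u -> 0 < h ->
  ((diff_quot (psi i) u h)%:E <= ratio_sup psi i)%E.
Proof.
move=> u_ge0 h_gt0; have le_uhu : u <= h + u by rewrite lerDr ltW.
apply: le_trans (ereal_sup_ubound _); last first.
  exists (h + u), u; split => //; [lra | by rewrite -subr_eq0 addrK gt_eqF].
rewrite lee_fin /diff_quot mulrC ler_wpM2l ?classC_subr_ge0 //.
rewrite lef_pV2 ?posrE ?phi_incr_gt0 //; last lra.
by have := phi_incr_le psiC i.+1 u_ge0 le_uhu; rewrite addrK.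
Qed.

End ClassD.

Section ClassD1.
Variables (R : realType) (I : nat) (psi : 'I_I -> R -> R).
Hypothesis psiD1 : classD1 psi.

Lemma dpsi_ge0 (u : R) (i : 'I_I) : 0 <= u -> 0 <= dpsi psi u i.
Proof. by move=> u_ge0; apply: classC1_derive_ge0 u_ge0; case: psiD1. Qed.

Lemma dpsi_le_ratio_sup (u : R) (i : 'I_I) : 0 <= u ->
  ((dpsi psi u i)%:E <= ratio_sup psi i)%E.
Proof.
move=> u_ge0; case: psiD1 => psiD /(_ i)[_ dpsi_i _].
have dq_cvg := extR_diff_quot_cvg u_ge0 (dpsi_i u).
case E: (ratio_sup psi i) => [r | | ]; last 2 first.
- exact: leey.
- by have := diff_quot_le_ratio_sup psiD i u_ge0 ltr01; rewrite E leeNy_eq.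
rewrite lee_fin; apply: (cvgr_to_le dq_cvg); near=> h.
have h_gt0 : 0 < h by near: h; exact: nbhs_right_gt.
by rewrite -lee_fin -E diff_quot_le_ratio_sup.
Unshelve. all: by end_near.
Qed.

Lemma weighted_dpsi_sum_lt1 (u : R) : 0 <= u ->
  \sum_(k < I) 2 * k.+1%:R * dpsi psi u k < 1.
Proof.
move=> u_ge0; case: psiD1 => -[_ _ weighted_ratio_lt] _.
suff : \sum_(k < I) k.+1%:R * dpsi psi u k < 1 / 2.
  by rewrite -(ltr_pM2l (ltr0n _ 2)) mulr_sumr; under eq_bigr do rewrite mulrA; lra.
rewrite -lte_fin; apply: le_lt_trans weighted_ratio_lt.
rewrite -sumEFin; apply: lee_sum => k _; rewrite EFinM.
by apply: lee_wpmul2l; [rewrite lee_fin | exact: dpsi_le_ratio_sup].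
Qed.

End ClassD1.

Theorem lemma6p7 (R : realType) (I : nat) (psi : 'I_I -> R -> R) :
  classD1 psi ->
  forall (i : 'I_I) (u : R), 0 <= u ->
    (i.+1)%:R * dpsi psi u i =
    \sum_(j < I) Mstar (dpsi psi u) i j * veff (dpsi psi u) j 0 * dpsi psi u j.
Proof.
move=> psiD1 i u u_ge0; apply: Mstar_veff; apply: Mmat_unitmx.
- by move=> k; exact: dpsi_ge0.
- exact: weighted_dpsi_sum_lt1.
Qed.
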